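(* Let $M,K,T$ be positive integers, $P_{\max}>0$, and fix a device index $k\in\{1,\dots,K\}$ with constants $\sigma_k^2>0$, $\delta_k^2>0$, $\omega_k^2>0$ and a power-splitting ratio $\rho_k\in(0,1]$. Let $\hat{\mathbf H}=[\hat{\bm h}_1,\dots,\hat{\bm h}_K]\in\mathbb C^{M\times K}$ be a random matrix with $\mathbb E[\|\hat{\bm h}_k\|^2]<\infty$, and let $\bm\phi_k\sim\mathcal{CN}(0,\omega_k^2\mathbf I_M)$ be independent of $\hat{\mathbf H}$; set $\bm h_k=\hat{\bm h}_k+\bm\phi_k$. Let $\bm\Theta$ be a (measurable) beamforming policy, i.e. a map $\hat{\mathbf H}\mapsto \mathbf F(\hat{\mathbf H})=[\bm f_1,\dots,\bm f_K]\in\mathbb C^{M\times K}$ with $\mathrm{Tr}(\mathbf F\mathbf F^H)\le P_{\max}$ for every $\hat{\mathbf H}$. Define the SINR \[ \Gamma_k=\frac{\rho_k|\bm h_k^H\bm f_k|^2}{\rho_k\big(\sum_{m\neq k}|\bm h_k^H\bm f_m|^2+\sigma_k^2\big)+\delta_k^2}, \] the quantity $\overline r_k(\rho_k,\bm\Theta)=\mathbb E_{\hat{\mathbf H},\bm\phi_k}[\log_2(1+\Gamma_k)]$, and the ergodic rate \[ \hat r_k^\circ(\rho_k,\bm\Theta)=\overline r_k(\rho_k,\bm\Theta)-\frac1T\sum_{m=1}^K\log_2\!\Big(1+\frac{T}{\rho_k\sigma_k^2+\delta_k^2}\,\mathrm{Var}(\bm h_k^H\bm f_m)\Big), \] where $\mathrm{Var}(X)=\mathbb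 E|X-\mathbb E X|^2$ is taken over the joint distribution of $(\hat{\mathbf H},\bm\phi_k)$. Then \[ \overline r_k(\rho_k,\bm\Theta)-\frac1T\sum_{m=1}^K\log_2\!\Big(1+\frac{TP_{\max}}{\delta_k^2}\,\mathbb E_{\hat{\mathbf H},\bm\phi_k}\big[\|\hat{\bm h}_k+\bm\phi_k\|^2\big]\Big)\;\le\;\hat r_k^\circ(\rho_k,\bm\Theta)\;\le\;\overline r_k(\rho_k,\bm\Theta). \]
   Context: Setting: downlink of a multi-antenna base station with $M$ antennas serving $K$ single-antenna devices; $\bm f_m$ is the beamformer for device $m$, $\rho_k$ is the fraction of received power sent to the information decoder of device $k$, $\sigma_k^2$ is the antenna noise variance, $\delta_k^2$ is the decoder noise variance, $\hat{\bm h}_k$ is the estimated channel and $\bm\phi_k$ the channel estimation error, $T$ is the channel coherence length. $\mathcal{CN}(0,\omega_k^2\mathbf I_M)$ denotes the circularly symmetric complex Gaussian distribution. *)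

From HB Require Import structures.
From mathcomp Require Import all_boot all_order all_algebra.
From mathcomp Require Import all_classical all_reals all_analysis.
From mathcomp Require Import complex.
Set Implicit Arguments. Unset Strict Implicit. Unset Printing Implicit Defensive.
Import Order.TTheory GRing.Theory Num.Theory.
Local Open Scope classical_set_scope.
Local Open Scope ring_scope.

Section defs.
Variable R : realType.

Definition log2 (x : R) : R := ln x / ln 2.

Definition csq (z : R[i]) : R := complex.Re z ^+ 2 + complex.Im z ^+ 2.

Definition cinner (M : nat) (h f : 'I_M -> R[i]) : R[i] :=
  \sum_(i < M) conjc (h i) * f i.

Definition vnorm2 (M : nat) (h : 'I_M -> R[i]) : R := \sum_(i < M) csq (h i).

Definition herm (M K : nat) (F : 'M[R[i]]_(M, K)) : 'M[R[i]]_(K, M) :=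
  (map_mx conjc F)^T.

Variables (d : measure_display) (Omega : measurableType d)
          (P : probability Omega R).

(* real expectation (the integral is shown finite in all uses) *)
Definition Ex (X : Omega -> R) : R := Rintegral P setT X.

Definition cEx (X : Omega -> R[i]) : R[i] :=
  Complex (Ex (fun w => complex.Re (X w))) (Ex (fun w => complex.Im (X w))).

Definition cVar (X : Omega -> R[i]) : R := Ex (fun w => csq (X w - cEx X)).

Definition cmeasurable (X : Omega -> R[i]) : Prop :=
  measurable_fun setT (fun w => complex.Re (X w)) /\
  measurable_fun setT (fun w => complex.Im (X w)).

(* Hhat (M x K complex random matrix) and phi (complex random M-vector) are
   independent and phi ~ CN(0, omega2 I_M), i.e. the 2M real coordinates of
   phi are i.i.d. N(0, omega2/2).  Stated on the generating pi-system of
   measurable rectangles in all real coordinates. *)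
Definition indep_CN_noise (M K : nat) (omega2 : R)
    (Hhat : Omega -> 'M[R[i]]_(M, K)) (phi : Omega -> 'I_M -> R[i]) : Prop :=
  forall (A B : 'I_M -> 'I_K -> set R) (C D : 'I_M -> set R),
    (forall i j, measurable (A i j)) -> (forall i j, measurable (B i j)) ->
    (forall i, measurable (C i)) -> (forall i, measurable (D i)) ->
    P ([set w | forall i j, A i j (complex.Re (Hhat w i j)) /\
                            B i j (complex.Im (Hhat w i j))] `&`
       [set w | forall i, C i (complex.Re (phi w i)) /\
                          D i (complex.Im (phi w i))]) =
    (P [set w | forall i j, A i j (complex.Re (Hhat w i j)) /\
                            B i j (complex.Im (Hhat w i j))] *
     \prod_(i < M) (normal_prob 0 (Num.sqrt (omega2 / 2)) (C i) *
                    normal_prob 0 (Num.sqrt (omega2 / 2)) (D i)))%E.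

End defs.

(* The upper bound holds because every variance is nonnegative, so each
   logarithmic penalty is nonnegative.  For the lower bound, the variance of
   the effective gain g_m = h_k^H f_m is at most its second moment E|g_m|^2;
   by Cauchy-Schwarz and the power constraint ||f_m||^2 <= Tr(F F^H) <= Pmax
   this is at most Pmax E||h_k||^2, and T / (rho sigma^2 + delta^2) <=
   T / delta^2, so monotonicity of log2 compares the penalties term by term.
   All expectations involved are finite because E||h_k||^2 < oo: the
   coordinates of the circular Gaussian noise have finite second moments,
   since x^2 times a centred Gaussian density is dominated by a multiple of the
   Gaussian density with twice the variance. *)

From HB Require Import structures.
From mathcomp Require Import all_boot all_order all_algebra.
From mathcomp Require Import all_classical all_reals all_analysis.
From mathcomp Require Import complex measurable_realfun.
From mathcomp Require Import ring lra.
Set Implicit Arguments. Unset Strict Implicit. Unset Printing Implicit Defensive.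
Import Order.TTheory GRing.Theory Num.Theory.
Local Open Scope classical_set_scope.
Local Open Scope ring_scope.

Section complex_vectors.
Variable R : realType.
Implicit Types (x y z : R[i]).

Lemma Re_sum (n : nat) (F : 'I_n -> R[i]) :
  complex.Re (\sum_(i < n) F i) = \sum_(i < n) complex.Re (F i).
Proof. exact: (@raddf_sum _ _ (@complex.Re R : Rcomplex R -> R)). Qed.

Lemma Im_sum (n : nat) (F : 'I_n -> R[i]) :
  complex.Im (\sum_(i < n) F i) = \sum_(i < n) complex.Im (F i).
Proof. exact: (@raddf_sum _ _ (@complex.Im R : Rcomplex R -> R)). Qed.

Lemma ReD x y : complex.Re (x + y) = complex.Re x + complex.Re y.
Proof. by case: x; case: y. Qed.

Lemma ImD x y : complex.Im (x + y) = complex.Im x + complex.Im y.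
Proof. by case: x; case: y. Qed.

Lemma Re_conjcM x y :
  complex.Re (conjc x * y) = complex.Re x * complex.Re y + complex.Im x * complex.Im y.
Proof. by case: x => a b; case: y => c e /=; ring. Qed.

Lemma Im_conjcM x y :
  complex.Im (conjc x * y) = complex.Re x * complex.Im y - complex.Im x * complex.Re y.
Proof. by case: x => a b; case: y => c e /=; ring. Qed.

Lemma csqE x : csq x = complex.Re (x * conjc x).
Proof. by case: x => a b; rewrite /csq /=; ring. Qed.

Lemma csqB x y :
  csq (x - y) = (complex.Re x - complex.Re y) ^+ 2 + (complex.Im x - complex.Im y) ^+ 2.
Proof. by case: x; case: y. Qed.

Lemma csq_ge0 x : 0 <= csq x.
Proof. by rewrite /csq addr_ge0 ?sqr_ge0. Qed.

Lemma csq_eq0 x : (csq x == 0) = (x == 0).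
Proof. by case: x => a b; rewrite /csq paddr_eq0 ?sqr_ge0 // !sqrf_eq0 eq_complex. Qed.

Lemma csqD_le x y : csq (x + y) <= 2 * csq x + 2 * csq y.
Proof.
case: x => a b; case: y => c e; rewrite /csq /=.
have := sqr_ge0 (a - c); have := sqr_ge0 (b - e); nra.
Qed.

Lemma vnorm2_ge0 (M : nat) (h : 'I_M -> R[i]) : 0 <= vnorm2 h.
Proof. by apply: sumr_ge0 => i _; exact: csq_ge0. Qed.

Lemma csq_cinner_le (M : nat) (h f : 'I_M -> R[i]) :
  csq (cinner h f) <= vnorm2 h * vnorm2 f.
Proof.
set z := cinner h f; set A := vnorm2 h; set B := vnorm2 f.
have [B0|B_gt0] := eqVneq B 0.
  have f0 i : f i = 0.
    by apply/eqP; rewrite -csq_eq0 (psumr_eq0P _ B0) // => j _; exact: csq_ge0.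
  have -> : z = 0 by rewrite /z /cinner big1 // => i _; rewrite f0 mulr0.
  by rewrite /csq /= expr0n /= addr0 mulr_ge0 ?vnorm2_ge0.
(* Expanding [0 <= \sum_i |B h_i - conj(z) f_i|^2] gives [0 <= B (A B - |z|^2)]. *)
have expand : \sum_(i < M) csq (B%:C%C * h i - conjc z * f i) =
    B * (B * A - csq z).
  transitivity (\sum_(i < M) (B ^+ 2 * csq (h i) + csq z * csq (f i) -
                    2 * B * complex.Re (conjc z * (conjc (h i) * f i)))).
    apply: eq_bigr => i _; rewrite /csq.
    by case: z => a b; case: (h i) => c e; case: (f i) => p q /=; ring.
  rewrite !big_split /= sumrN -!mulr_sumr -Re_sum -mulr_sumr -/(cinner h f) -/z.
  by rewrite -/(vnorm2 h) -/(vnorm2 f) -/A -/B [conjc z * z]mulrC -csqE; ring.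
have : 0 <= B * (B * A - csq z).
  by rewrite -expand sumr_ge0 // => i _; exact: csq_ge0.
by rewrite pmulr_rge0 ?lt_def ?B_gt0 ?vnorm2_ge0 // subr_ge0 mulrC.
Qed.

Lemma vnorm2D_le (M : nat) (h f : 'I_M -> R[i]) :
  vnorm2 (fun i => h i + f i) <= 2 * vnorm2 h + 2 * vnorm2 f.
Proof. by rewrite /vnorm2 !mulr_sumr -big_split ler_sum // => i _; exact: csqD_le. Qed.

Lemma vnorm2_col_le (M K : nat) (F : 'M[R[i]]_(M, K)) (m : 'I_K) (p : R) :
  \tr (F *m herm F) <= p%:C%C -> vnorm2 (fun i => F i m) <= p.
Proof.
rewrite lecE => /andP[_]; apply: le_trans.
rewrite /mxtrace Re_sum /vnorm2; apply: ler_sum => i _.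
rewrite mxE Re_sum (bigD1 m) //= !mxE -csqE lerDl.
by apply: sumr_ge0 => j _; rewrite !mxE -csqE csq_ge0.
Qed.

End complex_vectors.

Section complex_measurability.
Context (R : realType) (d : measure_display) (Omega : measurableType d).
Implicit Types X Y : Omega -> R[i].

Lemma cmeasurableD X Y : cmeasurable X -> cmeasurable Y ->
  cmeasurable (fun w => X w + Y w).
Proof.
case=> ? ? [? ?]; split; [under eq_fun do rewrite ReD | under eq_fun do rewrite ImD];
  exact: measurable_funD.
Qed.

Lemma cmeasurable_cinner (M : nat) (h f : Omega -> 'I_M -> R[i]) :
  (forall i, cmeasurable (h^~ i)) -> (forall i, cmeasurable (f^~ i)) ->
  cmeasurable (fun w => cinner (h w) (f w)).
Proof.
move=> mh mf; rewrite /cinner; split.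
- under eq_fun do rewrite Re_sum; apply: measurable_sum => i.
  under eq_fun do rewrite Re_conjcM.
  by case: (mh i) => ? ?; case: (mf i) => ? ?; apply: measurable_funD; exact: measurable_funM.
- under eq_fun do rewrite Im_sum; apply: measurable_sum => i.
  under eq_fun do rewrite Im_conjcM.
  by case: (mh i) => ? ?; case: (mf i) => ? ?; apply: measurable_funB; exact: measurable_funM.
Qed.

Lemma measurable_csq X : cmeasurable X -> measurable_fun setT (fun w => csq (X w)).
Proof. by case=> ? ?; apply: measurable_funD; exact: measurable_funX. Qed.

Lemma measurable_vnorm2 (M : nat) (h : Omega -> 'I_M -> R[i]) :
  (forall i, cmeasurable (h^~ i)) -> measurable_fun setT (fun w => vnorm2 (h w)).
Proof. by move=> mh; apply: measurable_sum => i; exact: measurable_csq. Qed.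

End complex_measurability.

Section integral_density.
Local Open Scope ereal_scope.
Context (d : measure_display) (T : measurableType d) (R : realType).
Variables (mu nu : {measure set T -> \bar R}) (g : T -> R).
Hypotheses (mg : measurable_fun setT g) (g_ge0 : forall x, (0 <= g x)%R).
Hypothesis nuE : forall A, measurable A -> nu A = \int[mu]_(x in A) (g x)%:E.

Import HBNNSimple.

Let integral_density_nnsfun (h : {nnsfun T >-> R}) :
  \int[nu]_x (h x)%:E = \int[mu]_x ((h x)%:E * (g x)%:E).
Proof.
have mh r : measurable (h @^-1` [set r]).
  by rewrite -(setTI (_ @^-1` _)); exact: measurable_funP.
transitivity (\sum_(r \in range h) \int[nu]_x (r * \1_(h @^-1` [set r]) x)%:E).
  under eq_integral do rewrite fimfunE -fsumEFin//.
  rewrite ge0_integral_fsum//.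
  - by move=> r; exact/measurable_EFinP/measurable_funM.
  - by move=> r x _; rewrite nnfun_muleindic_ge0.
transitivity (\sum_(r \in range h) \int[mu]_x (r * \1_(h @^-1` [set r]) x * g x)%:E).
  apply: eq_fsbigr => r /set_mem [y _ <-].
  rewrite integralZl_indic_nnsfun// integral_indic// setIT nuE//.
  rewrite integral_mkcond -ge0_integralZl_EFin//.
  - apply: eq_integral => x _; rewrite /patch /= indicE.
    by case: ifPn => _; rewrite ?mulr1 ?mulr0 ?mul0r ?mule0 -?EFinM.
  - by move=> x _; rewrite /patch; case: ifP => _ //; rewrite lee_fin.
  - apply/(measurable_restrictT _ _).1 => //.
    exact/measurable_EFinP/measurable_funTS.
rewrite -ge0_integral_fsum//.
- apply: eq_integral => x _; rewrite fsumEFin// -EFinM; congr (_%:E).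
  by rewrite [h x]fimfunE mulr_fsuml.
- move=> r; apply/measurable_EFinP; apply: measurable_funM => //.
  exact: measurable_funM.
- move=> r x _; rewrite lee_fin mulr_ge0//.
  by have := nnfun_muleindic_ge0 h r x; rewrite -EFinM lee_fin.
Qed.

Lemma ge0_integral_density (f : T -> \bar R) : measurable_fun setT f ->
  (forall x, 0 <= f x) -> \int[nu]_x f x = \int[mu]_x (f x * (g x)%:E).
Proof.
move=> mf f0; pose f_ := nnsfun_approx measurableT mf.
have f_f x : (EFin \o (fun n => f_ n x)) n @[n --> \oo] --> f x.
  exact: cvg_nnsfun_approx.
have nd_f_ x m n : (m <= n)%N -> (f_ m x <= f_ n x)%R.
  by move=> mn; exact/lefP/nd_nnsfun_approx.
transitivity (limn (fun n => \int[nu]_x (f_ n x)%:E)).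
  rewrite -monotone_convergence//.
  - by apply: eq_integral => x _; apply/esym/cvg_lim => //; exact: f_f.
  - by move=> n; exact/measurable_EFinP/measurable_funP.
  - by move=> n x _; rewrite lee_fin.
  - by move=> x _ m n mn; rewrite lee_fin nd_f_.
under eq_fun do rewrite integral_density_nnsfun.
rewrite -monotone_convergence//.
- apply: eq_integral => x _; apply/cvg_lim => //.
  have [->|gx0] := eqVneq (g x) 0%R.
    rewrite mule0; under eq_fun do rewrite mule0; exact: cvg_cst.
  apply: cvgeM; [|exact: f_f|exact: cvg_cst].
  have [fin|nfin] := boolP (f x \is a fin_num); first exact: mule_def_fin.
  by apply: mule_def_infty_neq0; rewrite // eqe.
- by move=> n; apply/measurable_EFinP; apply: measurable_funM.
- by move=> n x _; rewrite -EFinM lee_fin mulr_ge0.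
- by move=> x _ m n mn; rewrite -!EFinM lee_fin ler_wpM2r ?nd_f_.
Qed.

End integral_density.

Lemma sqr_mul_normal_fun_le (R : realType) (s x : R) : s != 0 ->
  x ^+ 2 * normal_fun 0 s x <= s ^+ 2 *+ 4 * normal_fun 0 (s * Num.sqrt 2) x.
Proof.
move=> s0; have s2_gt0 : 0 < s ^+ 2 by rewrite exprn_even_gt0.
rewrite /normal_fun !subr0 exprMn sqr_sqrtr //.
set y := x ^+ 2 / (s ^+ 2 *+ 4).
have y_ge0 : 0 <= y by rewrite divr_ge0 ?sqr_ge0 // mulrn_wge0 // ltW.
have -> : - x ^+ 2 / (s ^+ 2 *+ 2) = - y - y by rewrite /y; field.
have -> : - x ^+ 2 / (s ^+ 2 * 2 *+ 2) = - y by rewrite /y; field.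
have -> : x ^+ 2 = s ^+ 2 *+ 4 * y by rewrite /y; field.
(* [y e^{-y} <= 1] because [1 + y <= e^y] *)
rewrite expRD -mulrA ler_wpM2l ?mulrn_wge0 ?(ltW s2_gt0) // mulrA ler_piMl ?expR_ge0 //.
rewrite expRN ler_pdivrMr ?expR_gt0 // mul1r.
by apply: le_trans (expR_ge1Dx y); lra.
Qed.

Lemma normal_prob_sqr_lty (R : realType) (s : R) : s != 0 ->
  (\int[normal_prob 0 s]_x (x ^+ 2)%:E < +oo)%E.
Proof.
move=> s0; set s' := s * Num.sqrt 2.
have s'0 : s' != 0 by rewrite mulf_neq0 // sqrtr_eq0 -ltNge.
rewrite (@ge0_integral_density _ _ _ lebesgue_measure (normal_prob 0 s) _
  (measurable_normal_pdf 0 s) (normal_pdf_ge0 0 s) (fun _ _ => erefl)); last first.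
- by move=> x; rewrite lee_fin sqr_ge0.
- exact/measurable_EFinP/measurable_funX.
set c := s ^+ 2 *+ 4 * normal_peak s / normal_peak s'.
have c_ge0 : 0 <= c by rewrite !mulr_ge0 ?mulrn_wge0 ?sqr_ge0 ?normal_peak_ge0 ?invr_ge0.
apply: (@le_lt_trans _ _ (\int[lebesgue_measure]_x (c%:E * (normal_pdf 0 s' x)%:E))%E).
  apply: ge0_le_integral => //.
  - by move=> x _; rewrite -EFinM lee_fin mulr_ge0 ?sqr_ge0 ?normal_pdf_ge0.
  - apply/measurable_EFinP/measurable_funM; first exact: measurable_funX.
    exact: measurable_normal_pdf.
  - by apply/measurable_EFinP/measurable_funM => //; exact: measurable_normal_pdf.
  move=> x _; rewrite -!EFinM lee_fin /normal_pdf (negbTE s0) (negbTE s'0).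
  have -> : c * (normal_peak s' * normal_fun 0 s' x) =
            normal_peak s * (s ^+ 2 *+ 4 * normal_fun 0 s' x).
    by rewrite /c; field; rewrite gt_eqF ?normal_peak_gt0.
  by rewrite mulrCA ler_wpM2l ?normal_peak_ge0 ?sqr_mul_normal_fun_le.
rewrite ge0_integralZl_EFin //.
- by rewrite integral_normal_pdf mule1 ltry.
- by move=> x _; rewrite lee_fin normal_pdf_ge0.
- by apply/measurable_EFinP; exact: measurable_normal_pdf.
Qed.

Section real_expectation.
Context (R : realType) (d : measure_display) (Omega : measurableType d)
  (P : probability Omega R).
Local Notation integrable f := (P.-integrable setT (EFin \o f)).
Implicit Types f g X : Omega -> R.

Lemma le_Rintegrable f g : measurable_fun setT f ->
  (forall w, `|f w| <= g w) -> integrable g -> integrable f.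
Proof.
move=> mf fg; apply: le_integrable => //; first exact/measurable_EFinP.
by move=> w _; rewrite /= lee_fin (le_trans (fg w)) // ler_norm.
Qed.

Lemma ge0_Rintegrable {f} : measurable_fun setT f -> (forall w, 0 <= f w) ->
  (\int[P]_w (f w)%:E < +oo)%E -> integrable f.
Proof.
move=> mf f0 fin; apply/integrableP; split; first exact/measurable_EFinP.
by under eq_integral do rewrite /= ger0_norm //.
Qed.

Lemma RintegrableD {f g} : integrable f -> integrable g -> integrable (fun w => f w + g w).
Proof. by move=> fi gi; apply: eq_integrable (integrableD measurableT fi gi). Qed.

Lemma RintegrableZl (k : R) {f} : integrable f -> integrable (fun w => k * f w).
Proof. by move=> fi; apply: eq_integrable (integrableZl measurableT k fi). Qed.

Lemma Rintegrable_cst (k : R) : integrable (cst k).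
Proof. exact: finite_measure_integrable_cst. Qed.

Lemma Rintegrable_sum {n : nat} {f : 'I_n -> Omega -> R} :
  (forall i, integrable (f i)) -> integrable (fun w => \sum_(i < n) f i w).
Proof.
move=> fi; have := @integrable_sum _ _ _ P setT measurableT _ (index_enum 'I_n)
  predT (fun i w => (f i w)%:E) (fun i _ => fi i).
by apply: eq_integrable => // w _; rewrite /= -sumEFin.
Qed.

Lemma Rintegrable_sqr {X} : measurable_fun setT X ->
  integrable (fun w => X w ^+ 2) -> integrable X.
Proof.
move=> mX X2i; apply: (le_Rintegrable (g := fun w => 1 + X w ^+ 2)) => //.
  by move=> w; rewrite ler_norml; apply/andP; split; nra.
exact: (RintegrableD (Rintegrable_cst 1) X2i).
Qed.

Lemma Ex_sqr_center_le {X} : measurable_fun setT X ->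
  integrable (fun w => X w ^+ 2) ->
  Ex P (fun w => (X w - Ex P X) ^+ 2) <= Ex P (fun w => X w ^+ 2).
Proof.
move=> mX X2i; have Xi := Rintegrable_sqr mX X2i; set a := Ex P X.
have -> : (fun w => (X w - a) ^+ 2) =
          (fun w => X w ^+ 2 + (- 2 * a) * X w) \+ cst (a ^+ 2).
  by apply/funext => w /=; ring.
rewrite /Ex RintegralD //; last 2 first.
- exact: RintegrableD X2i (RintegrableZl _ Xi).
- exact: Rintegrable_cst.
rewrite RintegralD ?RintegralZl ?Rintegral_cst //;
  [|exact: Rintegrable_cst|exact: RintegrableZl].
have -> : fine (P [set: Omega]) = 1 by rewrite probability_setT.
rewrite mulr1 -/(Ex P X) -/a; have := sqr_ge0 a; nra.
Qed.

Lemma cVar_ge0 (Z : Omega -> R[i]) : 0 <= cVar P Z.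
Proof. by apply: Rintegral_ge0 => w _; exact: csq_ge0. Qed.

Lemma cVar_le_Ex_csq (Z : Omega -> R[i]) : cmeasurable Z ->
  integrable (fun w => csq (Z w)) -> cVar P Z <= Ex P (fun w => csq (Z w)).
Proof.
case=> mX mY Zi.
set X := fun w => complex.Re (Z w); set Y := fun w => complex.Im (Z w).
have X2i : integrable (fun w => X w ^+ 2).
  apply: le_Rintegrable Zi; first exact: measurable_funX.
  by move=> w; rewrite ger0_norm ?sqr_ge0 // /csq lerDl sqr_ge0.
have Y2i : integrable (fun w => Y w ^+ 2).
  apply: le_Rintegrable Zi; first exact: measurable_funX.
  by move=> w; rewrite ger0_norm ?sqr_ge0 // /csq lerDr sqr_ge0.
have centered a (W : Omega -> R) : measurable_fun setT W ->
    integrable (fun w => W w ^+ 2) -> integrable (fun w => (W w - a) ^+ 2).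
  move=> mW W2i; apply: (le_Rintegrable (g := fun w => 2 * W w ^+ 2 + 2 * a ^+ 2)).
  - by apply: measurable_funX; exact: measurable_funB.
  - by move=> w; rewrite ger0_norm ?sqr_ge0 //; have := sqr_ge0 (W w + a); nra.
  - exact/RintegrableD/Rintegrable_cst/RintegrableZl.
rewrite /cVar /cEx; under eq_fun do rewrite csqB /=.
rewrite /Ex /csq RintegralD //; [|exact: centered|exact: centered].
rewrite RintegralD //.
exact: lerD (Ex_sqr_center_le mX X2i) (Ex_sqr_center_le mY Y2i).
Qed.

Lemma cVar_cinner_le (M : nat) (h f : Omega -> 'I_M -> R[i]) (p : R) :
  (forall i, cmeasurable (h^~ i)) -> (forall i, cmeasurable (f^~ i)) ->
  integrable (fun w => vnorm2 (h w)) -> (forall w, vnorm2 (f w) <= p) ->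
  cVar P (fun w => cinner (h w) (f w)) <= p * Ex P (fun w => vnorm2 (h w)).
Proof.
move=> mh mf hi f_le.
have csq_le w : csq (cinner (h w) (f w)) <= p * vnorm2 (h w).
  rewrite mulrC; apply: le_trans (csq_cinner_le _ _) _.
  by rewrite ler_wpM2l ?vnorm2_ge0.
have mhf := cmeasurable_cinner mh mf.
have hfi : integrable (fun w => csq (cinner (h w) (f w))).
  apply: (le_Rintegrable (g := fun w => p * vnorm2 (h w))).
  - exact: measurable_csq.
  - by move=> w; rewrite ger0_norm ?csq_ge0.
  - exact: RintegrableZl.
apply: le_trans (cVar_le_Ex_csq mhf hfi) _.
by rewrite /Ex -RintegralZl //; apply: le_Rintegral => //; exact: RintegrableZl.
Qed.

Lemma Rintegrable_sqr_normal {X} (s : R) : s != 0 -> measurable_fun setT X ->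
  (forall A, measurable A -> P (X @^-1` A) = normal_prob 0 s A) ->
  integrable (fun w => X w ^+ 2).
Proof.
move=> s0 mX lawX; apply: ge0_Rintegrable.
- exact: measurable_funX.
- by move=> w; exact: sqr_ge0.
pose sqrE (x : measurableTypeR R) := ((x : R) ^+ 2)%:E.
have mX' : measurable_fun [set: Omega] (X : Omega -> measurableTypeR R) := mX.
have msqr : measurable_fun setT sqrE by exact/measurable_EFinP/measurable_funX.
have := ge0_integral_pushforward mX' P measurableT msqr (fun y _ => sqr_ge0 (y : R)).
rewrite preimage_setT => push.
rewrite (_ : (\int[P]_w _)%E = \int[P]_w (sqrE \o X) w)%E // -push.
rewrite (@eq_measure_integral _ _ _ setT (normal_prob 0 s)); first exact: normal_prob_sqr_lty.
by move=> A mA _; exact: lawX.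
Qed.

End real_expectation.

Section circular_noise.
Context (R : realType) (d : measure_display) (Omega : measurableType d)
  (P : probability Omega R) (M K : nat) (omega2 : R)
  (Hhat : Omega -> 'M[R[i]]_(M, K)) (phi : Omega -> 'I_M -> R[i]).
Hypothesis noise : indep_CN_noise P omega2 Hhat phi.
Local Notation sigma := (Num.sqrt (omega2 / 2)).

Lemma indep_CN_noise_coord (i : 'I_M) (C D : set R) : measurable C -> measurable D ->
  P [set w | C (complex.Re (phi w i)) /\ D (complex.Im (phi w i))] =
  (normal_prob 0 sigma C * normal_prob 0 sigma D)%E.
Proof.
move=> mC mD; pose at_i (A : set R) (j : 'I_M) := if j == i then A else setT.
have m_at_i A j : measurable A -> measurable (at_i A j).
  by rewrite /at_i; case: ifP.
have := @noise (fun _ _ => setT) (fun _ _ => setT) (at_i C) (at_i D)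
  (fun _ _ => measurableT) (fun _ _ => measurableT) (m_at_i C ^~ mC) (m_at_i D ^~ mD).
rewrite (_ : [set w | forall j l, _] = setT); last by apply/seteqP; split.
rewrite setTI probability_setT mul1e (bigD1 i) //= big1 ?mule1 /at_i ?eqxx.
  move=> <-; congr (P _); apply/seteqP; split=> [w [Cw Dw] j|w /(_ i)].
    by case: eqP => [->|].
  by rewrite eqxx.
by move=> j /negbTE ->; rewrite !probability_setT mule1.
Qed.

Hypothesis omega2_gt0 : 0 < omega2.

Lemma Rintegrable_csq_noise (i : 'I_M) : cmeasurable (phi^~ i) ->
  P.-integrable setT (EFin \o (fun w => csq (phi w i))).
Proof.
case=> mRe mIm; have sigma_neq0 : sigma != 0 by rewrite gt_eqF // sqrtr_gt0 divr_gt0.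
apply: RintegrableD; apply: (Rintegrable_sqr_normal sigma_neq0) => // A mA.
- rewrite -[RHS]mule1 -(probability_setT (normal_prob 0 sigma)) -(indep_CN_noise_coord i) //.
  by congr (P _); apply/seteqP; split=> w /=; [|case].
- rewrite -[RHS]mul1e -(probability_setT (normal_prob 0 sigma)) -(indep_CN_noise_coord i) //.
  by congr (P _); apply/seteqP; split=> w /=; [|case].
Qed.

Lemma Rintegrable_vnorm2_add_noise (x : Omega -> 'I_M -> R[i]) :
  (forall i, cmeasurable (x^~ i)) -> (forall i, cmeasurable (phi^~ i)) ->
  (\int[P]_w (vnorm2 (x w))%:E < +oo)%E ->
  P.-integrable setT (EFin \o (fun w => vnorm2 (fun i => x w i + phi w i))).
Proof.
move=> mx mphi x_lty.
apply: (le_Rintegrable (g := fun w => 2 * vnorm2 (x w) + 2 * vnorm2 (phi w))).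
- by apply: measurable_vnorm2 => i; exact: cmeasurableD.
- by move=> w; rewrite ger0_norm ?vnorm2_ge0 ?vnorm2D_le.
apply: RintegrableD; apply: RintegrableZl.
  by apply: ge0_Rintegrable => //; [exact: measurable_vnorm2 | move=> w; exact: vnorm2_ge0].
by apply: Rintegrable_sum => i; exact: Rintegrable_csq_noise.
Qed.

End circular_noise.

Lemma log2_ge0 (R : realType) (x : R) : 1 <= x -> 0 <= log2 x.
Proof. by move=> x_ge1; rewrite divr_ge0 ?ln_ge0 ?ler1n. Qed.

Lemma ler_log2 (R : realType) (x y : R) : 0 < x -> x <= y -> log2 x <= log2 y.
Proof.
move=> x_gt0 xy; rewrite ler_pM2r ?invr_gt0 ?ln_gt0 ?ltr1n //.
by rewrite ler_ln ?posrE // (lt_le_trans x_gt0).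
Qed.

Lemma rate_penalty_bounds (R : realType) (K T : nat) (r a : R) (b : 'I_K -> R) :
  (0 < T)%N -> (forall m, 0 <= b m <= a) ->
  r - T%:R^-1 * \sum_(m < K) log2 (1 + a)
    <= r - T%:R^-1 * \sum_(m < K) log2 (1 + b m) <= r.
Proof.
move=> T_gt0 b_a; have Tinv_ge0 : 0 <= T%:R^-1 :> R by rewrite invr_ge0 ler0n.
apply/andP; split.
  rewrite lerD2l lerN2 ler_wpM2l // ler_sum // => m _.
  by have /andP[bm_ge0 bm_le] := b_a m; rewrite ler_log2 ?lerD2l ?ltr_pwDl.
rewrite gerBl mulr_ge0 // sumr_ge0 // => m _.
by have /andP[bm_ge0 _] := b_a m; rewrite log2_ge0 // lerDl.
Qed.

Theorem proposition1 (R : realType) (M K T : nat) (k : 'I_K)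
    (Pmax sigma2 delta2 omega2 rho : R)
    (d : measure_display) (Omega : measurableType d) (P : probability Omega R)
    (Hhat : Omega -> 'M[R[i]]_(M, K)) (phi : Omega -> 'I_M -> R[i])
    (F : 'M[R[i]]_(M, K) -> 'M[R[i]]_(M, K)) :
  (0 < M)%N -> (0 < K)%N -> (0 < T)%N ->
  0 < Pmax -> 0 < sigma2 -> 0 < delta2 -> 0 < omega2 ->
  0 < rho <= 1 ->
  (forall i j, cmeasurable (fun w => Hhat w i j)) ->
  (forall i, cmeasurable (fun w => phi w i)) ->
  (forall i j, cmeasurable (fun w => F (Hhat w) i j)) ->
  (\int[P]_w (vnorm2 (fun i => Hhat w i k))%:E < +oo)%E ->
  indep_CN_noise P omega2 Hhat phi ->
  (forall H : 'M[R[i]]_(M, K), \tr (F H *m herm (F H)) <= Pmax%:C%C) ->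
  let h w := fun i => Hhat w i k + phi w i in
  let g w m := cinner (h w) (fun i => F (Hhat w) i m) in
  let Gamma w := rho * csq (g w k) /
      (rho * (\sum_(m < K | m != k) csq (g w m) + sigma2) + delta2) in
  let rbar := Ex P (fun w => log2 (1 + Gamma w)) in
  let rhat := rbar - T%:R^-1 * \sum_(m < K)
      log2 (1 + T%:R / (rho * sigma2 + delta2) * cVar P (fun w => g w m)) in
  rbar - T%:R^-1 * \sum_(m < K)
      log2 (1 + T%:R * Pmax / delta2 * Ex P (fun w => vnorm2 (h w)))
    <= rhat <= rbar.
Proof.
move=> _ _ T_gt0 Pmax_gt0 sigma2_gt0 delta2_gt0 omega2_gt0 /andP[rho_gt0 _]
  mHhat mphi mF Hk_lty noise power.
pose h w i := Hhat w i k + phi w i.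
have mh i : cmeasurable (h^~ i) := cmeasurableD (mHhat i k) (mphi i).
have h_int := Rintegrable_vnorm2_add_noise noise omega2_gt0 (fun i => mHhat i k) mphi Hk_lty.
have snr_ge0 : 0 <= T%:R / (rho * sigma2 + delta2) by rewrite divr_ge0 ?ler0n //; nra.
have snr_le : T%:R / (rho * sigma2 + delta2) <= T%:R / delta2.
  by rewrite ler_pM2l ?ltr0n // lef_pV2 ?posrE ?addr_gt0 ?mulr_gt0 // lerDr mulr_ge0 ?ltW.
apply: (rate_penalty_bounds _ T_gt0) => m; rewrite mulr_ge0 ?cVar_ge0 //=.
rewrite [X in _ <= X](_ : _ = T%:R / delta2 * (Pmax * Ex P (fun w => vnorm2 (h w)))); last by ring.
apply: ler_pM => //; first exact: cVar_ge0.
by apply: cVar_cinner_le => // w; exact: vnorm2_col_le.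
Qed.
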